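(* Let $k$ be an odd positive integer and suppose $$k^2=a^2+b^2+c^2=a'^2+b'^2+c'^2$$ are two different representations with integers $a,b,c,a',b',c'$, $\gcd(a,b,c,a',b',c')=1$, $c'>c$, and $a,a'$ both odd. Set $$\Delta_{12}=\tfrac{a'-a}{2},\ \Delta_{34}=\tfrac{a+a'}{2},\ \Delta_{13}=-\tfrac{b'-b}{2},\ \Delta_{24}=\tfrac{b+b'}{2},\ \Delta_{14}=\tfrac{c+c'}{2},\ \Delta_{23}=\tfrac{c'-c}{2}.$$ Then these are integers satisfying $$\Delta_{12}\Delta_{34}-\Delta_{13}\Delta_{24}+\Delta_{14}\Delta_{23}=0$$ and $$k^2=(\Delta_{12}\pm \Delta_{34})^2+(\Delta_{13}\mp\Delta_{24})^2+(\Delta_{14}\pm\Delta_{23})^2$$ (for both choices of signs). Moreover, the set $\mathcal S$ of all $[u,v,w,t]\in\mathbb{Z}^4$ with $$\Delta_{34}v+\Delta_{24}w+\Delta_{23}t=0,\qquad \Delta_{23}u+\Delta_{13}v+\Delta_{12}w=0$$ is a two-dimensional lattice that contains a family of lattice squares, i.e. there exist nonzero vectors $X,Y\in\mathcal S$ with $X\cdot Y=0$ and $X\cdot X=Y\cdot Y$.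
   Context: $\cdot$ denotes the standard dot product on $\mathbb{R}^4$. *)

From Stdlib Require Import ZArith.
Open Scope Z_scope.

Definition vec4 : Type := (Z * Z * Z * Z)%type.

Definition v4 (u v w t : Z) : vec4 := (u, v, w, t).

Definition dot4 (x y : vec4) : Z :=
  let '(x1, x2, x3, x4) := x in
  let '(y1, y2, y3, y4) := y in
  x1 * y1 + x2 * y2 + x3 * y3 + x4 * y4.

Definition add4 (x y : vec4) : vec4 :=
  let '(x1, x2, x3, x4) := x in
  let '(y1, y2, y3, y4) := y in
  (x1 + y1, x2 + y2, x3 + y3, x4 + y4).

Definition scale4 (m : Z) (x : vec4) : vec4 :=
  let '(x1, x2, x3, x4) := x in
  (m * x1, m * x2, m * x3, m * x4).

Definition zero4 : vec4 := (0, 0, 0, 0).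

Definition gcd6 (a b c a' b' c' : Z) : Z :=
  Z.gcd a (Z.gcd b (Z.gcd c (Z.gcd a' (Z.gcd b' c')))).

Definition inS (D12 D34 D13 D24 D23 : Z) (x : vec4) : Prop :=
  let '(u, v, w, t) := x in
  D34 * v + D24 * w + D23 * t = 0 /\ D23 * u + D13 * v + D12 * w = 0.

Definition two_dim_lattice (L : vec4 -> Prop) : Prop :=
  exists e1 e2 : vec4,
    L e1 /\ L e2 /\
    (forall m n : Z, add4 (scale4 m e1) (scale4 n e2) = zero4 -> m = 0 /\ n = 0) /\
    (forall x : vec4, L x <-> exists m n : Z, x = add4 (scale4 m e1) (scale4 n e2)).

(* Since a, a' are odd, b, b', c, c' are even (mod 4), so the six half sums and differences are
   integers; doubling turns the Plücker relation into the difference of the two representations of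
   k^2, and the two sign choices give back a', b', c' and a, b, c.  The set S is the kernel of an
   integer 2 x 4 matrix whose minor in the (u, t) columns is -Δ23^2 <> 0, so S is a rank-two subgroup of
   Z^4; a basis is obtained from the least positive value of the v-coordinate on S and the least
   positive value of the w-coordinate on S ∩ {v = 0}.  The square is spanned by
   X = k (-Δ13, Δ23, 0, -Δ34) and a second vector Y ∈ S orthogonal to X. *)
From Stdlib Require Import ZArith Lia Classical.
Open Scope Z_scope.

Lemma odd_square_sum_even k a b c :
  Z.Odd k -> Z.Odd a -> k ^ 2 = a ^ 2 + b ^ 2 + c ^ 2 -> Z.Even b /\ Z.Even c.
Proof.
  intros [m ->] [n ->] E.
  destruct (Z.Even_or_Odd b) as [[p ->]|[p ->]];
  destruct (Z.Even_or_Odd c) as [[q ->]|[q ->]].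
  - split; [exists p | exists q]; reflexivity.
  - exfalso; assert (4 * (m*m + m - n*n - n - p*p - q*q - q) = 1) by lia; lia.
  - exfalso; assert (4 * (m*m + m - n*n - n - p*p - p - q*q) = 1) by lia; lia.
  - exfalso; assert (4 * (m*m + m - n*n - n - p*p - p - q*q - q) = 2) by lia; lia.
Qed.

Lemma divide2_add_sub_odd x y : Z.Odd x -> Z.Odd y -> (2 | x + y) /\ (2 | y - x).
Proof. intros [m ->] [n ->]; split; [exists (m + n + 1) | exists (n - m)]; ring. Qed.

Lemma divide2_add_sub_even x y : Z.Even x -> Z.Even y -> (2 | x + y) /\ (2 | y - x).
Proof. intros [m ->] [n ->]; split; [exists (m + n) | exists (n - m)]; ring. Qed.

Lemma double_half x : (2 | x) -> 2 * (x / 2) = x.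
Proof. intros [m ->]; rewrite Z.div_mul; [ring | discriminate]. Qed.

Section Deltas.
Variables a b c a' b' c' D12 D34 D13 D24 D14 D23 : Z.
Hypotheses (h12 : 2 * D12 = a' - a) (h34 : 2 * D34 = a + a')
           (h13 : 2 * D13 = b - b') (h24 : 2 * D24 = b + b')
           (h14 : 2 * D14 = c + c') (h23 : 2 * D23 = c' - c).

Lemma deltas_sum_plus :
  (D12 + D34) ^ 2 + (D13 - D24) ^ 2 + (D14 + D23) ^ 2 = a' ^ 2 + b' ^ 2 + c' ^ 2.
Proof.
  replace (D12 + D34) with a' by lia. replace (D13 - D24) with (- b') by lia.
  replace (D14 + D23) with c' by lia. ring.
Qed.

Lemma deltas_sum_minus :
  (D12 - D34) ^ 2 + (D13 + D24) ^ 2 + (D14 - D23) ^ 2 = a ^ 2 + b ^ 2 + c ^ 2.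
Proof.
  replace (D12 - D34) with (- a) by lia. replace (D13 + D24) with b by lia.
  replace (D14 - D23) with c by lia. ring.
Qed.

Lemma deltas_sum_squares :
  2 * (D12 ^ 2 + D34 ^ 2 + D13 ^ 2 + D24 ^ 2 + D14 ^ 2 + D23 ^ 2)
  = a ^ 2 + b ^ 2 + c ^ 2 + (a' ^ 2 + b' ^ 2 + c' ^ 2).
Proof. rewrite <- deltas_sum_plus, <- deltas_sum_minus; ring. Qed.

Lemma deltas_plucker :
  a ^ 2 + b ^ 2 + c ^ 2 = a' ^ 2 + b' ^ 2 + c' ^ 2 ->
  D12 * D34 - D13 * D24 + D14 * D23 = 0.
Proof.
  intros E.
  enough (4 * (D12 * D34 - D13 * D24 + D14 * D23) = 0) by lia.
  transitivity ((2 * D12) * (2 * D34) - (2 * D13) * (2 * D24) + (2 * D14) * (2 * D23)); [ring|].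
  rewrite h12, h34, h13, h24, h14, h23.
  transitivity (a' ^ 2 + b' ^ 2 + c' ^ 2 - (a ^ 2 + b ^ 2 + c ^ 2)); [ring | lia].
Qed.

End Deltas.

Lemma Z_least_positive (P : Z -> Prop) d :
  0 < d -> P d -> exists g, 0 < g /\ P g /\ forall y, 0 < y -> P y -> g <= y.
Proof.
  intros Hd; generalize Hd; pattern d; apply Z_lt_induction; [clear d Hd | lia].
  intros x IH Hx Px.
  destruct (classic (exists y, 0 < y < x /\ P y)) as [[y [Hy Py]] | Hno].
  - apply (IH y); [lia | lia | exact Py].
  - exists x; split; [exact Hx | split; [exact Px |]].
    intros y Hy Py. apply Z.nlt_ge; intros Hyx; apply Hno; eauto.
Qed.

Lemma Z_subgroup_principal (H : Z -> Prop) :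
  (forall x y, H x -> H y -> H (x + y)) -> (forall m x, H x -> H (m * x)) ->
  forall d, d <> 0 -> H d ->
  exists g, 0 < g /\ H g /\ forall x, H x -> exists m, x = m * g.
Proof.
  intros Hadd Hscale d Hd Hdin.
  assert (Habs : H (Z.abs d)) by (rewrite <- Z.sgn_abs, Z.mul_comm; apply Hscale, Hdin).
  destruct (Z_least_positive H (Z.abs d)) as [g [Hg [Hgin Hmin]]]; [lia | exact Habs |].
  exists g; split; [exact Hg | split; [exact Hgin |]].
  intros x Hx; exists (x / g).
  assert (Hmod : H (x mod g)).
  { rewrite Z.mod_eq by lia.
    replace (x - g * (x / g)) with (x + - (x / g) * g) by ring.
    apply Hadd, Hscale; assumption. }
  pose proof (Z.mod_pos_bound x g Hg) as Hbound.
  assert (Hrem : x mod g = 0).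
  { destruct (Z.eq_dec (x mod g) 0) as [E | E]; [exact E |].
    specialize (Hmin (x mod g) ltac:(lia) Hmod); lia. }
  rewrite (Z.div_mod x g) at 1 by lia; rewrite Hrem; ring.
Qed.

Section Plane.
Variables D12 D34 D13 D24 D23 : Z.
Hypothesis D23_neq0 : D23 <> 0.
Local Notation S := (inS D12 D34 D13 D24 D23).

Lemma inS_add x y : S x -> S y -> S (add4 x y).
Proof.
  destruct x as [[[x1 x2] x3] x4], y as [[[y1 y2] y3] y4]; simpl.
  intros [] []; split; lia.
Qed.

Lemma inS_scale m x : S x -> S (scale4 m x).
Proof.
  destruct x as [[[x1 x2] x3] x4]; simpl; intros [E1 E2]; split.
  - transitivity (m * (D34 * x2 + D24 * x3 + D23 * x4)); [ring | rewrite E1; ring].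
  - transitivity (m * (D23 * x1 + D13 * x2 + D12 * x3)); [ring | rewrite E2; ring].
Qed.

Lemma inS_vw0 u t : S (u, 0, 0, t) -> u = 0 /\ t = 0.
Proof.
  simpl; rewrite !Z.mul_0_r, !Z.add_0_r, Z.add_0_l; intros [Et Eu].
  apply Z.mul_eq_0 in Et, Eu; lia.
Qed.

Lemma inS_two_dim_lattice : two_dim_lattice S.
Proof.
  destruct (Z_subgroup_principal (fun v => exists u w t, S (u, v, w, t)))
    with (d := D23) as [g [Hg [[u1 [w1 [t1 Se1]]] Hv]]].
  { intros x y [u [w [t Sx]]] [u' [w' [t' Sy]]].
    exists (u + u'), (w + w'), (t + t'); exact (inS_add _ _ Sx Sy). }
  { intros m x [u [w [t Sx]]].
    exists (m * u), (m * w), (m * t); exact (inS_scale m _ Sx). }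
  { exact D23_neq0. }
  { exists (- D13), 0, (- D34); simpl; split; ring. }
  destruct (Z_subgroup_principal (fun w => exists u t, S (u, 0, w, t)))
    with (d := D23) as [h [Hh [[u2 [t2 Se2]] Hw]]].
  { intros x y [u [t Sx]] [u' [t' Sy]].
    exists (u + u'), (t + t'); exact (inS_add _ _ Sx Sy). }
  { intros m x [u [t Sx]].
    exists (m * u), (m * t); rewrite <- (Z.mul_0_r m); exact (inS_scale m _ Sx). }
  { exact D23_neq0. }
  { exists (- D12), (- D24); simpl; split; ring. }
  exists (u1, g, w1, t1), (u2, 0, h, t2).
  split; [exact Se1 | split; [exact Se2 | split]].
  - intros m n [= _ E2 E3 _].
    assert (m = 0) by nia; subst m; split; [reflexivity | nia].
  - intros [[[u v] w] t]; split.
    + intros Sx.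
      destruct (Hv v) as [m Hm]; [exists u, w, t; exact Sx |].
      pose proof (inS_add _ _ Sx (inS_scale (- m) _ Se1)) as Sx1; cbn [add4 scale4] in Sx1.
      replace (v + - m * g) with 0 in Sx1 by lia.
      destruct (Hw (w + - m * w1)) as [n Hn]; [eauto |].
      pose proof (inS_add _ _ Sx1 (inS_scale (- n) _ Se2)) as Sx2; cbn [add4 scale4] in Sx2.
      replace (0 + - n * 0) with 0 in Sx2 by ring.
      replace (w + - m * w1 + - n * h) with 0 in Sx2 by lia.
      apply inS_vw0 in Sx2.
      exists m, n; simpl; f_equal; [f_equal; [f_equal |] |]; lia.
    + intros [m [n ->]]; apply inS_add; apply inS_scale; assumption.
Qed.

(* |X|^2 = k^2 N and |Y|^2 = N (sum of the six squared Deltas) - (Plücker form)^2. *)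
Lemma inS_square k D14 :
  k <> 0 ->
  D12 * D34 - D13 * D24 + D14 * D23 = 0 ->
  k ^ 2 = D12 ^ 2 + D34 ^ 2 + D13 ^ 2 + D24 ^ 2 + D14 ^ 2 + D23 ^ 2 ->
  exists X Y : vec4, S X /\ S Y /\ X <> zero4 /\ Y <> zero4 /\
    dot4 X Y = 0 /\ dot4 X X = dot4 Y Y.
Proof.
  intros Hk Hpl Hsum.
  set (N := D13 ^ 2 + D23 ^ 2 + D34 ^ 2).
  assert (HN : 0 < N).
  { assert (0 < D23 * D23).
    { destruct (Z.lt_trichotomy D23 0) as [Hlt | [Heq | Hgt]];
        [apply Z.mul_neg_neg | contradiction | apply Z.mul_pos_pos]; assumption. }
    pose proof (Z.square_nonneg D13); pose proof (Z.square_nonneg D34).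
    unfold N; rewrite !Z.pow_2_r; lia. }
  exists (k * - D13, k * D23, 0, k * - D34),
    (D12 * D23 - D14 * D34, D12 * D13 + D24 * D34, - N, D14 * D13 + D24 * D23).
  split; [simpl; split; ring |].
  split; [simpl; unfold N; split |].
  { transitivity (D13 * (D12 * D34 - D13 * D24 + D14 * D23)); [ring | rewrite Hpl; ring]. }
  { transitivity (- D34 * (D12 * D34 - D13 * D24 + D14 * D23)); [ring | rewrite Hpl; ring]. }
  split; [intros [= _ E2 _]; apply Z.mul_eq_0 in E2; tauto |].
  split.
  { intros [= _ _ E3 _].
    apply (Z.lt_neq _ _ HN); rewrite <- (Z.opp_involutive N), E3; reflexivity. }
  split; [simpl; unfold N; ring |].
  simpl.
  transitivity (k ^ 2 * N); [unfold N; ring |].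
  rewrite Hsum.
  transitivity (N * (D12 ^ 2 + D34 ^ 2 + D13 ^ 2 + D24 ^ 2 + D14 ^ 2 + D23 ^ 2)
                - (D12 * D34 - D13 * D24 + D14 * D23) ^ 2); [rewrite Hpl; ring |].
  unfold N; ring.
Qed.
End Plane.

Theorem theorem2p8 (k a b c a' b' c' : Z) :
  0 < k -> Z.Odd k ->
  k ^ 2 = a ^ 2 + b ^ 2 + c ^ 2 ->
  k ^ 2 = a' ^ 2 + b' ^ 2 + c' ^ 2 ->
  (a, b, c) <> (a', b', c') ->
  gcd6 a b c a' b' c' = 1 ->
  c' > c ->
  Z.Odd a -> Z.Odd a' ->
  let D12 := (a' - a) / 2 in
  let D34 := (a + a') / 2 in
  let D13 := - ((b' - b) / 2) in
  let D24 := (b + b') / 2 in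
  let D14 := (c + c') / 2 in
  let D23 := (c' - c) / 2 in
  (* the Delta's are integers: the halved quantities are even *)
  ((2 | a' - a) /\ (2 | a + a') /\ (2 | b' - b) /\ (2 | b + b') /\
   (2 | c + c') /\ (2 | c' - c)) /\
  D12 * D34 - D13 * D24 + D14 * D23 = 0 /\
  k ^ 2 = (D12 + D34) ^ 2 + (D13 - D24) ^ 2 + (D14 + D23) ^ 2 /\
  k ^ 2 = (D12 - D34) ^ 2 + (D13 + D24) ^ 2 + (D14 - D23) ^ 2 /\
  two_dim_lattice (inS D12 D34 D13 D24 D23) /\
  (exists X Y : vec4,
     inS D12 D34 D13 D24 D23 X /\ inS D12 D34 D13 D24 D23 Y /\
     X <> zero4 /\ Y <> zero4 /\
     dot4 X Y = 0 /\ dot4 X X = dot4 Y Y).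
Proof.
  intros Hk Hk_odd E E' _ _ Hcc' Ha Ha' D12 D34 D13 D24 D14 D23.
  pose proof (odd_square_sum_even k a b c Hk_odd Ha E) as [Hb Hc].
  pose proof (odd_square_sum_even k a' b' c' Hk_odd Ha' E') as [Hb' Hc'].
  pose proof (divide2_add_sub_odd a a' Ha Ha') as [Ha_add Ha_sub].
  pose proof (divide2_add_sub_even b b' Hb Hb') as [Hb_add Hb_sub].
  pose proof (divide2_add_sub_even c c' Hc Hc') as [Hc_add Hc_sub].
  assert (h12 : 2 * D12 = a' - a) by exact (double_half _ Ha_sub).
  assert (h34 : 2 * D34 = a + a') by exact (double_half _ Ha_add).
  assert (h13 : 2 * D13 = b - b')
    by (unfold D13; rewrite Z.mul_opp_r, (double_half _ Hb_sub); ring).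
  assert (h24 : 2 * D24 = b + b') by exact (double_half _ Hb_add).
  assert (h14 : 2 * D14 = c + c') by exact (double_half _ Hc_add).
  assert (h23 : 2 * D23 = c' - c) by exact (double_half _ Hc_sub).
  split; [repeat split; assumption |].
  pose proof (deltas_sum_squares _ _ _ _ _ _ _ _ _ _ _ _ h12 h34 h13 h24 h14 h23) as Hsum.
  assert (Hpl : D12 * D34 - D13 * D24 + D14 * D23 = 0)
    by (apply (deltas_plucker a b c a' b' c'); congruence).
  assert (HD23 : D23 <> 0) by (clear - h23 Hcc'; lia).
  split; [exact Hpl |].
  split; [rewrite (deltas_sum_plus a b c a' b' c'); assumption |].
  split; [rewrite (deltas_sum_minus a b c a' b' c'); assumption |].
  split; [exact (inS_two_dim_lattice _ _ _ _ _ HD23) |].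
  apply (inS_square _ _ _ _ _ HD23 k D14 ltac:(lia) Hpl).
  apply (Z.mul_cancel_l _ _ 2); [discriminate |].
  rewrite Hsum, <- E, <- E'; ring.
Qed.
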